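(* Let $W=W_1\times\cdots\times W_k$ be a Coxeter group written as a product of irreducible Coxeter groups (with generating set the disjoint union of those of the factors). Then $W$ is FC-periodic if and only if all factors $W_i$ are FC-finite except possibly one factor, which is FC-periodic.
   Context: For a Coxeter system $(W,S)$ (matrix $(m_{st})$, length $\ell$), $w$ is fully commutative (FC) if any two reduced expressions of $w$ are related by repeatedly swapping adjacent letters $s,t$ with $m_{st}=2$; $W^{FC}_l$ is the set of FC elements of length $l$. $W$ is FC-finite if it has finitely many FC elements, and FC-periodic if the sequence $(|W^{FC}_l|)_{l\ge0}$ is ultimately periodic (there are $p\ge1$, $l_0$ with $|W^{FC}_{l+p}|=|W^{FC}_l|$ for $l\ge l_0$). A Coxeter group is irreducible if its Coxeter graph (vertices $S$, edges $\{s,t\}$ with $m_{st}\ge3$) is connected. *)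

From Stdlib Require Import Relation_Operators ClassicalEpsilon.
From HB Require Import structures.
From mathcomp Require Import all_boot.
Set Implicit Arguments. Unset Strict Implicit. Unset Printing Implicit Defensive.

Definition pbool (P : Prop) : bool :=
  if excluded_middle_informative P then true else false.

(* A Coxeter matrix on a finite generating set S is m : S -> S -> nat,
   with the convention m s t = 0 encoding m_{st} = infinity. *)
Definition coxeter_matrix (S : finType) (m : S -> S -> nat) : Prop :=
  [/\ forall s, m s s = 1,
      forall s t, m s t = m t s &
      forall s t, s != t -> m s t != 1].

Fixpoint alt (S : Type) (s t : S) (n : nat) : seq S :=
  if n is n'.+1 then s :: alt t s n' else [::].

(* W = free monoid on S modulo ss = 1 and the braid relations
   (this monoid presentation gives the Coxeter group). *)
Inductive cox_step (S : finType) (m : S -> S -> nat) : seq S -> seq S -> Prop :=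
| cs_del (a b : seq S) (s : S) : cox_step m (a ++ [:: s; s] ++ b) (a ++ b)
| cs_braid (a b : seq S) (s t : S) : s != t -> m s t != 0 ->
    cox_step m (a ++ alt s t (m s t) ++ b) (a ++ alt t s (m s t) ++ b).

Definition same_elt (S : finType) (m : S -> S -> nat) : seq S -> seq S -> Prop :=
  clos_refl_sym_trans _ (cox_step m).

Definition reduced (S : finType) (m : S -> S -> nat) (w : seq S) : Prop :=
  forall v, same_elt m w v -> size w <= size v.

Inductive comm_step (S : finType) (m : S -> S -> nat) : seq S -> seq S -> Prop :=
| cm_swap (a b : seq S) (s t : S) : m s t = 2 ->
    comm_step m (a ++ [:: s; t] ++ b) (a ++ [:: t; s] ++ b).

Definition comm_equiv (S : finType) (m : S -> S -> nat) : seq S -> seq S -> Prop :=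
  clos_refl_sym_trans _ (comm_step m).

Definition FC_word (S : finType) (m : S -> S -> nat) (w : seq S) : Prop :=
  reduced m w /\ forall v, same_elt m w v -> reduced m v -> comm_equiv m w v.

(* |W^FC_l| : number of elements (classes of words) that are FC of length l *)
Definition FC_count (S : finType) (m : S -> S -> nat) (l : nat) : nat :=
  #|[set [set v : l.-tuple S | pbool (same_elt m w v)]
      | w : l.-tuple S in [set w : l.-tuple S | pbool (FC_word m w)]]|.

Definition FC_finite (S : finType) (m : S -> S -> nat) : Prop :=
  exists ws : seq (seq S),
    forall w, FC_word m w -> exists2 v, v \in ws & same_elt m w v.

Definition FC_periodic (S : finType) (m : S -> S -> nat) : Prop :=
  exists p l0, 0 < p /\ forall l, l0 <= l -> FC_count m (l + p) = FC_count m l.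

(* Coxeter graph: edge {s,t} iff s <> t and m_{st} >= 3 (incl. infinity) *)
Definition cox_edge (S : finType) (m : S -> S -> nat) : rel S :=
  fun s t => (s != t) && (m s t != 2).

Definition irreducible (S : finType) (m : S -> S -> nat) : Prop :=
  forall s t : S, connect (cox_edge m) s t.

(* Coxeter matrix of the direct product W_1 x ... x W_k, generating set the
   disjoint union {i : 'I_k & T i}; generators of distinct factors commute. *)
Definition prod_mx (k : nat) (T : 'I_k -> finType)
    (mi : forall i, T i -> T i -> nat) (x y : {i : 'I_k & T i}) : nat :=
  if tag x == tag y then mi (tag x) (tagged x) (tagged_as x y) else 2.

From Stdlib Require Import Relation_Operators ClassicalEpsilon Classical.
From mathcomp Require Import all_boot zify.
Set Implicit Arguments. Unset Strict Implicit. Unset Printing Implicit Defensive.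

(* Generators of different factors commute, so a word over several factors is fully
   commutative iff its projections to the factors are, and FC elements of length l of
   W_J x W_K correspond to pairs of FC elements of lengths a and l - a: the FC counting
   sequence of a product is the convolution of those of its factors.  An FC-finite
   factor has an eventually zero sequence, and convolving with such a sequence preserves
   ultimate periodicity.  Conversely, an ultimately periodic sequence is bounded, while the
   convolution c of the (positive) sequences of two FC-infinite factors has c l > l; and if
   c = conv a r is ultimately periodic with r finitely supported and r 0 = 1, then a is bounded
   and obeys a recurrence of finite order, so it is ultimately periodic by pigeonhole. *)

Lemma clos_rst_map (A B : Type) (R : A -> A -> Prop) (R' : B -> B -> Prop) (F : A -> B) :
  (forall u v, R u v -> clos_refl_sym_trans B R' (F u) (F v)) ->
  forall u v, clos_refl_sym_trans A R u v -> clos_refl_sym_trans B R' (F u) (F v).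
Proof.
move=> H u v; elim => [x y /H //|x|x y _ IH|x y z _ IH1 _ IH2].
- exact: rst_refl.
- exact: rst_sym.
- exact: rst_trans IH1 IH2.
Qed.

Lemma map_alt (S S' : Type) (f : S -> S') s t n : map f (alt s t n) = alt (f s) (f t) n.
Proof. by elim: n s t => [//|n IH] s t /=; rewrite IH. Qed.

Lemma pmap_alt (S S' : Type) (h : S -> option S') s t x y n :
  h s = Some x -> h t = Some y -> pmap h (alt s t n) = alt x y n.
Proof. by elim: n s t x y => [//|n IH] s t x y hs ht /=; rewrite hs /= (IH t s y x). Qed.

Lemma pmap_alt_None (S S' : Type) (h : S -> option S') s t n :
  h s = None -> h t = None -> pmap h (alt s t n) = [::].
Proof. by elim: n s t => [//|n IH] s t hs ht /=; rewrite hs /= IH. Qed.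

Section WordEquivalences.

Variables (S : finType) (m : S -> S -> nat).

Lemma same_elt_refl u : same_elt m u u. Proof. exact: rst_refl. Qed.

Lemma same_elt_sym u v : same_elt m u v -> same_elt m v u. Proof. exact: rst_sym. Qed.

Lemma same_elt_trans v u w : same_elt m u v -> same_elt m v w -> same_elt m u w.
Proof. exact: rst_trans. Qed.

Lemma comm_equiv_refl u : comm_equiv m u u. Proof. exact: rst_refl. Qed.

Lemma comm_equiv_sym u v : comm_equiv m u v -> comm_equiv m v u. Proof. exact: rst_sym. Qed.

Lemma comm_equiv_trans v u w : comm_equiv m u v -> comm_equiv m v w -> comm_equiv m u w.
Proof. exact: rst_trans. Qed.

Lemma comm_equiv_same_elt u v : comm_equiv m u v -> same_elt m u v.
Proof.
apply: (clos_rst_map (F := id)) => _ _ [a b s t mst] /=.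
case: (eqVneq s t) => [<-|neq_st]; first exact: rst_refl.
by apply: rst_step; have := @cs_braid S m a b s t neq_st; rewrite mst; apply.
Qed.

Lemma same_elt_ctx a b u v : same_elt m u v -> same_elt m (a ++ u ++ b) (a ++ v ++ b).
Proof.
apply: (clos_rst_map (F := fun x => a ++ x ++ b)) => _ _ [a' b' s|a' b' s t st mst].
- by apply: rst_step; have := cs_del m (a ++ a') (b' ++ b) s; rewrite -!catA.
- by apply: rst_step; have := cs_braid (a ++ a') (b' ++ b) st mst; rewrite -!catA.
Qed.

Lemma comm_equiv_ctx a b u v : comm_equiv m u v -> comm_equiv m (a ++ u ++ b) (a ++ v ++ b).
Proof.
apply: (clos_rst_map (F := fun x => a ++ x ++ b)) => _ _ [a' b' s t mst].
by apply: rst_step; have := cm_swap (a ++ a') (b' ++ b) mst; rewrite -!catA.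
Qed.

Lemma comm_equiv_cons x u v : comm_equiv m u v -> comm_equiv m (x :: u) (x :: v).
Proof. by move=> e; have := comm_equiv_ctx [:: x] [::] e; rewrite !cats0. Qed.

Lemma same_elt_cat u u' v v' :
  same_elt m u u' -> same_elt m v v' -> same_elt m (u ++ v) (u' ++ v').
Proof.
move=> eu ev; apply: (same_elt_trans (same_elt_ctx [::] v eu)).
by have := same_elt_ctx u' [::] ev; rewrite !cats0.
Qed.

Lemma comm_equiv_cat u u' v v' :
  comm_equiv m u u' -> comm_equiv m v v' -> comm_equiv m (u ++ v) (u' ++ v').
Proof.
move=> eu ev; apply: (comm_equiv_trans (comm_equiv_ctx [::] v eu)).
by have := comm_equiv_ctx u' [::] ev; rewrite !cats0.
Qed.

Lemma reduced_same_elt_size u v :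
  reduced m u -> reduced m v -> same_elt m u v -> size u = size v.
Proof. by move=> ru rv e; apply/eqP; rewrite eqn_leq ru //= rv //; apply: same_elt_sym. Qed.

Lemma reduced_same_elt w v : reduced m w -> same_elt m w v -> size v = size w -> reduced m v.
Proof. by move=> rw e sz x ex; rewrite sz; apply: rw; apply: same_elt_trans ex. Qed.

Lemma reduced_catl u v : reduced m (u ++ v) -> reduced m u.
Proof.
move=> r u' e; have := r _ (same_elt_cat e (same_elt_refl v)).
by rewrite !size_cat leq_add2r.
Qed.

Lemma reduced_catr u v : reduced m (u ++ v) -> reduced m v.
Proof.
move=> r v' e; have := r _ (same_elt_cat (same_elt_refl u) e).
by rewrite !size_cat leq_add2l.
Qed.

End WordEquivalences.

Section LetterMaps.

Variables (S S' : finType) (m : S -> S -> nat) (m' : S' -> S' -> nat).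

Lemma same_elt_pmap (h : S -> option S') :
  (forall s t x y, h s = Some x -> h t = Some y -> m' x y = m s t) ->
  (forall s t x, h s = Some x -> h t = Some x -> s = t) ->
  (forall s t x, h s = Some x -> h t = None -> m s t = 2 /\ m t s = 2) ->
  forall u v, same_elt m u v -> same_elt m' (pmap h u) (pmap h v).
Proof.
move=> hm hi hc; apply: clos_rst_map => _ _ [a b s|a b s t st mst]; rewrite !pmap_cat.
- case hs: (h s) => [x|] /=; rewrite hs /=; last exact: rst_refl.
  exact/rst_step/(cs_del m' (pmap h a) (pmap h b) x).
- case hs: (h s) => [x|]; case ht: (h t) => [y|].
  + rewrite (pmap_alt _ hs ht) (pmap_alt _ ht hs) -(hm _ _ _ _ hs ht).
    apply/rst_step/cs_braid; last by rewrite (hm _ _ _ _ hs ht).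
    by apply: contra_neq st => exy; subst y; apply: hi hs ht.
  + by have [-> _] := hc _ _ _ hs ht; rewrite /= hs ht; apply: rst_refl.
  + by have [_ ->] := hc _ _ _ ht hs; rewrite /= hs ht; apply: rst_refl.
  + by rewrite !pmap_alt_None //; apply: rst_refl.
Qed.

Lemma comm_equiv_pmap (h : S -> option S') :
  (forall s t x y, h s = Some x -> h t = Some y -> m' x y = m s t) ->
  forall u v, comm_equiv m u v -> comm_equiv m' (pmap h u) (pmap h v).
Proof.
move=> hm; apply: clos_rst_map => _ _ [a b s t mst]; rewrite !pmap_cat /=.
case hs: (h s) => [x|]; case ht: (h t) => [y|] /=; try exact: rst_refl.
by apply/rst_step/cm_swap; rewrite (hm _ _ _ _ hs ht).
Qed.

Variable f : S' -> S.
Hypotheses (f_inj : injective f) (m_f : forall x y, m (f x) (f y) = m' x y).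

Lemma same_elt_map u v : same_elt m' u v -> same_elt m (map f u) (map f v).
Proof.
apply: clos_rst_map => _ _ [a b s|a b s t st mst]; rewrite !map_cat /=.
- exact/rst_step/cs_del.
- rewrite !map_alt -m_f; apply/rst_step/cs_braid; first by rewrite (inj_eq f_inj).
  by rewrite m_f.
Qed.

Lemma comm_equiv_map u v : comm_equiv m' u v -> comm_equiv m (map f u) (map f v).
Proof.
apply: clos_rst_map => _ _ [a b s t mst]; rewrite !map_cat /=.
by apply/rst_step/cm_swap; rewrite m_f.
Qed.

End LetterMaps.

Definition commutes_outside (S : finType) (m : S -> S -> nat) (P : pred S) :=
  forall s t, P s -> ~~ P t -> m s t = 2 /\ m t s = 2.

Section CommutingOutside.

Variables (S : finType) (m : S -> S -> nat) (P : pred S).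
Hypothesis cP : commutes_outside m P.

Let keep (s : S) := if P s then Some s else None.

Let pmap_keep w : pmap keep w = filter P w.
Proof. by elim: w => [//|x w IH] /=; rewrite /keep; case: (P x); rewrite /= IH. Qed.

Lemma same_elt_filter u v : same_elt m u v -> same_elt m (filter P u) (filter P v).
Proof.
move=> e; rewrite -!pmap_keep; apply: (same_elt_pmap _ _ _ e); rewrite /keep.
- by move=> s t x y; case: (P s) => // -[<-]; case: (P t) => // -[<-].
- by move=> s t x; case: (P s) => // -[<-]; case: (P t) => // -[<-].
- by move=> s t x; case Ps: (P s) => // _; case Pt: (P t) => // _; apply: cP; rewrite ?Ps ?Pt.
Qed.

Lemma comm_equiv_filter u v : comm_equiv m u v -> comm_equiv m (filter P u) (filter P v).
Proof.
move=> e; rewrite -!pmap_keep; apply: (comm_equiv_pmap _ e); rewrite /keep.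
by move=> s t x y; case: (P s) => // -[<-]; case: (P t) => // -[<-].
Qed.

Lemma comm_equiv_split w : comm_equiv m w (filter P w ++ filter (predC P) w).
Proof.
have move_past x u v : all P u -> ~~ P x -> comm_equiv m (x :: u ++ v) (u ++ x :: v).
  elim: u => [|y u IH] /=; first by move=> _ _; apply: comm_equiv_refl.
  case/andP=> Py Pu Px; have [_ e] := cP Py Px.
  apply: (comm_equiv_trans (rst_step _ _ _ _ (cm_swap [::] (u ++ v) e))).
  exact/comm_equiv_cons/IH.
elim: w => [|x w IH] /=; first exact: comm_equiv_refl.
apply: (comm_equiv_trans (comm_equiv_cons x IH)) => /=.
case Px: (P x) => /=; first exact: comm_equiv_refl.
exact: move_past (filter_all P w) (negbT Px).
Qed.

Lemma same_elt_split w : same_elt m w (filter P w ++ filter (predC P) w).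
Proof. exact/comm_equiv_same_elt/comm_equiv_split. Qed.

End CommutingOutside.

Lemma commutes_outsideC (S : finType) (m : S -> S -> nat) (P : pred S) :
  commutes_outside m P -> commutes_outside m (predC P).
Proof. by move=> cP s t /= Ps; rewrite negbK => Pt; have [? ?] := cP _ _ Pt Ps. Qed.

Lemma commutes_outsideU (S : finType) (m : S -> S -> nat) (P Q : pred S) :
  commutes_outside m P -> commutes_outside m Q -> commutes_outside m (predU P Q).
Proof. by move=> cP cQ s t /orP[Ps|Qs] /norP[Pt Qt]; [apply: cP | apply: cQ]. Qed.

Lemma filter_disj_nil (T : Type) (P Q : pred T) u :
  (forall s, P s -> ~~ Q s) -> all Q u -> filter P u = [::].
Proof.
move=> PQ; elim: u => //= x u IH /andP[Qx /IH ->].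
by case Px: (P x); rewrite // (negbTE (PQ _ Px)) in Qx.
Qed.

Lemma reduced_all (S : finType) (m : S -> S -> nat) (P : pred S) v u :
  commutes_outside m P -> reduced m v -> same_elt m v u -> all P u -> all P v.
Proof.
move=> cP rv e au.
have e_out : same_elt m (filter (predC P) v) [::].
  have <- : filter (predC P) u = [::] by apply: filter_disj_nil au => s.
  exact: (same_elt_filter (commutes_outsideC cP) e).
have e_in : same_elt m v (filter P v).
  apply: same_elt_trans (same_elt_split cP v) _.
  by have := same_elt_cat (same_elt_refl m (filter P v)) e_out; rewrite cats0.
by rewrite all_count eqn_leq count_size -size_filter rv.
Qed.

Section DisjointSplitting.

Variables (S : finType) (m : S -> S -> nat) (P Q : pred S).
Hypotheses (PQ_disj : forall s, P s -> ~~ Q s)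
  (cP : commutes_outside m P) (cQ : commutes_outside m Q).

Lemma filterC_disj w : all (predU P Q) w -> filter (predC P) w = filter Q w.
Proof.
move=> /allP aw; apply: eq_in_filter => x /aw /orP[Px|Qx] /=.
- by rewrite Px (negbTE (PQ_disj Px)).
- by rewrite Qx; apply: contraTN Qx => /PQ_disj.
Qed.

Lemma same_elt_split_disj w :
  all (predU P Q) w -> same_elt m w (filter P w ++ filter Q w).
Proof. by move=> aw; rewrite -filterC_disj //; apply: same_elt_split. Qed.

Lemma comm_equiv_split_disj w :
  all (predU P Q) w -> comm_equiv m w (filter P w ++ filter Q w).
Proof. by move=> aw; rewrite -filterC_disj //; apply: comm_equiv_split. Qed.

Lemma count_disj_le v : count P v + count Q v <= size v.
Proof.
rewrite -count_predUI (@eq_count _ (predI P Q) pred0) ?count_pred0 ?addn0 ?count_size //.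
by move=> x /=; case Px: (P x); rewrite //= (negbTE (PQ_disj Px)).
Qed.

Lemma size_split_disj v : all (predU P Q) v -> size v = count P v + count Q v.
Proof.
move=> av; apply/eqP; rewrite eqn_leq count_disj_le andbT -count_predUI.
by move: av; rewrite all_count => /eqP <-; apply: leq_addr.
Qed.

Lemma reduced_split_disj w :
  all (predU P Q) w -> reduced m w -> reduced m (filter P w ++ filter Q w).
Proof.
move=> aw rw; apply: (reduced_same_elt rw (same_elt_split_disj aw)).
by rewrite size_cat !size_filter (size_split_disj aw).
Qed.

Lemma reduced_of_filters w : all (predU P Q) w ->
  reduced m (filter P w) -> reduced m (filter Q w) -> reduced m w.
Proof.
move=> aw rP rQ v e; rewrite (size_split_disj aw) -!size_filter.
apply: leq_trans (count_disj_le v); rewrite -!size_filter.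
exact: leq_add (rP _ (same_elt_filter cP e)) (rQ _ (same_elt_filter cQ e)).
Qed.

Lemma FC_word_filter w : all (predU P Q) w -> FC_word m w -> FC_word m (filter P w).
Proof.
move=> aw [rw fw]; have rP := reduced_catl (reduced_split_disj aw rw); split=> // v e rv.
have av : all P v by apply: (reduced_all cP rv (same_elt_sym e)); apply: filter_all.
have e' : same_elt m w (v ++ filter Q w).
  exact: same_elt_trans (same_elt_split_disj aw) (same_elt_cat e (same_elt_refl m _)).
have rv' : reduced m (v ++ filter Q w).
  apply: (reduced_same_elt rw e'); rewrite size_cat -(reduced_same_elt_size rP rv e).
  by rewrite !size_filter (size_split_disj aw).
have := comm_equiv_filter P (fw _ e' rv').
by rewrite filter_cat (all_filterP av) (filter_disj_nil PQ_disj (filter_all Q w)) cats0.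
Qed.

Lemma FC_word_of_filters w : all (predU P Q) w ->
  FC_word m (filter P w) -> FC_word m (filter Q w) -> FC_word m w.
Proof.
move=> aw [rP fP] [rQ fQ]; have rw := reduced_of_filters aw rP rQ; split=> // v e rv.
have av := reduced_all (commutes_outsideU cP cQ) rv (same_elt_sym e) aw.
have rv' := reduced_split_disj av rv.
have cmP := fP _ (same_elt_filter cP e) (reduced_catl rv').
have cmQ := fQ _ (same_elt_filter cQ e) (reduced_catr rv').
apply: comm_equiv_trans (comm_equiv_split_disj aw) _.
apply: comm_equiv_trans (comm_equiv_cat cmP cmQ) _.
exact/comm_equiv_sym/comm_equiv_split_disj.
Qed.

Lemma same_elt_filters w w' : all (predU P Q) w -> all (predU P Q) w' ->
  same_elt m w w' <->
  same_elt m (filter P w) (filter P w') /\ same_elt m (filter Q w) (filter Q w').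
Proof.
move=> aw aw'; split=> [e|[eP eQ]]; first by split; apply: same_elt_filter.
apply: same_elt_trans (same_elt_split_disj aw) _.
exact: same_elt_trans (same_elt_cat eP eQ) (same_elt_sym (same_elt_split_disj aw')).
Qed.

End DisjointSplitting.

Lemma pboolP (P : Prop) : reflect P (pbool P).
Proof. by rewrite /pbool; case: excluded_middle_informative => h; constructor. Qed.

Lemma card_imset_kernel_le (X Y Z : finType) (A : {set X}) (F : X -> Y) (G : X -> Z) :
  {in A &, forall x y, F x = F y -> G x = G y} -> #|G @: A| <= #|F @: A|.
Proof.
move=> FG; case: (set_0Vmem A) => [->|[x0 Ax0]]; first by rewrite !imset0 cards0.
pose phi y := if [pick x in A | F x == y] is Some x then G x else G x0.
apply: leq_trans (leq_imset_card phi (F @: A)).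
apply/subset_leq_card/subsetP => _ /imsetP[x Ax ->]; apply/imsetP; exists (F x).
  exact: imset_f.
rewrite /phi; case: pickP => [x' /andP[Ax' /eqP e]|/(_ x)]; last by rewrite Ax eqxx.
by rewrite (FG _ _ Ax Ax' (esym e)).
Qed.

Lemma card_imset_kernel (X Y Z : finType) (A : {set X}) (F : X -> Y) (G : X -> Z) :
  {in A &, forall x y, F x = F y <-> G x = G y} -> #|F @: A| = #|G @: A|.
Proof.
by move=> FG; apply/eqP; rewrite eqn_leq !card_imset_kernel_le // => x y Ax Ay /FG ->.
Qed.

Lemma card_imset_sum_level (X Y : finType) (A : {set X}) (F : X -> Y) (k : X -> nat) n :
  {in A &, forall x y, F x = F y -> k x = k y} -> {in A, forall x, k x < n} ->
  #|F @: A| = \sum_(a < n) #|F @: [set x in A | k x == a]|.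
Proof.
move=> Fk kn; rewrite {1}(_ : A = [set x in A | k x < n]); last first.
  by apply/setP => x; rewrite inE; case Ax: (x \in A); rewrite //= kn.
elim: n {kn} => [|n IH].
  rewrite big_ord0; apply/eqP; rewrite cards_eq0 -subset0; apply/subsetP => y.
  by case/imsetP => x; rewrite inE ltn0 andbF.
rewrite big_ord_recr /= -IH.
have -> : [set x in A | k x < n.+1] = [set x in A | k x < n] :|: [set x in A | k x == n].
  by apply/setP => x; rewrite !inE ltnS leq_eqVlt orbC -andb_orr.
rewrite imsetU cardsU; set B := _ :&: _; suff -> : B = set0 by rewrite cards0 subn0.
apply/setP => y; rewrite !inE; apply/negP => /andP[/imsetP[x1 + ->] /imsetP[x2]].
rewrite !inE => /andP[A1 k1] /andP[A2 /eqP k2] /(Fk _ _ A1 A2) k12.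
by rewrite k12 k2 ltnn in k1.
Qed.

Section Counting.

Variables (S : finType) (m : S -> S -> nat).

Definition elt_class l (w : seq S) : {set l.-tuple S} :=
  [set v : l.-tuple S | pbool (same_elt m w v)].

Definition FC_tuples (P : pred S) l : {set l.-tuple S} :=
  [set w : l.-tuple S | pbool (FC_word m w) && all P w].

(* |W_P^FC_l| for the standard parabolic subgroup W_P generated by [P]. *)
Definition FC_count_in (P : pred S) l :=
  #|[set elt_class l w | w : l.-tuple S in FC_tuples P l]|.

Lemma FC_count_in_all (P : pred S) l : (forall s, P s) -> FC_count m l = FC_count_in P l.
Proof.
move=> Ptotal; rewrite /FC_count_in /FC_tuples.
suff -> : [set w : l.-tuple S | pbool (FC_word m w) && all P w] =
          [set w : l.-tuple S | pbool (FC_word m w)] by [].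
by apply/setP => w; rewrite !inE (_ : all P w) ?andbT //; apply/allP => s.
Qed.

Lemma eq_FC_count_in (P Q : pred S) l : P =1 Q -> FC_count_in P l = FC_count_in Q l.
Proof.
move=> PQ; rewrite /FC_count_in /FC_tuples.
suff -> : [set w : l.-tuple S | pbool (FC_word m w) && all P w] =
          [set w : l.-tuple S | pbool (FC_word m w) && all Q w] by [].
by apply/setP => w; rewrite !inE (eq_all PQ).
Qed.

Lemma elt_class_eq l (u v : seq S) :
  size u = l -> elt_class l u = elt_class l v <-> same_elt m u v.
Proof.
move=> su; split=> [E|e].
- have su' : size u == l by rewrite su.
  have : Tuple su' \in elt_class l u by rewrite inE; apply/pboolP/same_elt_refl.
  by rewrite E inE => /pboolP /same_elt_sym.
- apply/setP => x; rewrite !inE; apply/pboolP/pboolP => h.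
  + exact: same_elt_trans (same_elt_sym e) h.
  + exact: same_elt_trans e h.
Qed.

Lemma FC_word_nil : FC_word m [::].
Proof.
split=> [v _ //|v e rv]; have := rv _ (same_elt_sym e).
by rewrite leqn0 size_eq0 => /eqP ->; apply: comm_equiv_refl.
Qed.

Lemma FC_count_in0 (P : pred S) : FC_count_in P 0 = 1.
Proof.
rewrite /FC_count_in (_ : FC_tuples P 0 = [set [tuple]]) ?imset_set1 ?cards1 //.
apply/setP => w; rewrite !inE (tuple0 w) eqxx /= andbT; exact/pboolP/FC_word_nil.
Qed.

Lemma FC_count_in_eq0 (P : pred S) l :
  (forall w, FC_word m w -> all P w -> size w != l) -> FC_count_in P l = 0.
Proof.
move=> H; apply/eqP; rewrite cards_eq0 -subset0; apply/subsetP => y /imsetP[w + _].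
by rewrite inE => /andP[/pboolP fw aw]; have := H _ fw aw; rewrite size_tuple eqxx.
Qed.

Lemma FC_count_in_gt0 (P : pred S) (w : seq S) :
  FC_word m w -> all P w -> 0 < FC_count_in P (size w).
Proof.
move=> fw aw; rewrite card_gt0; apply/set0Pn; exists (elt_class (size w) (in_tuple w)).
by apply: imset_f; rewrite inE aw andbT; apply/pboolP.
Qed.

End Counting.

Section Embedding.

Variables (S S' : finType) (m : S -> S -> nat) (m' : S' -> S' -> nat).
Variables (f : S' -> S) (g : S -> option S') (P : pred S).
Hypotheses (fK : pcancel f g) (gK : ocancel g f) (P_g : forall y, P y = g y).
Hypotheses (cP : commutes_outside m P) (m_f : forall x y, m (f x) (f y) = m' x y).

Let f_inj : injective f := pcan_inj fK.

Let g_some y x : g y = Some x -> y = f x.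
Proof. by move=> gy; have := gK y; rewrite gy. Qed.

Lemma map_pmap_emb v : all P v -> map f (pmap g v) = v.
Proof.
by move=> av; rewrite (pmap_filter gK); apply/all_filterP; rewrite (eq_all P_g) in av.
Qed.

Lemma same_elt_pmap_emb u v : same_elt m u v -> same_elt m' (pmap g u) (pmap g v).
Proof.
apply: same_elt_pmap.
- by move=> s t x y /g_some -> /g_some ->.
- by move=> s t x /g_some -> /g_some ->.
- by move=> s t x gs gt; apply: cP; rewrite P_g ?gs ?gt.
Qed.

Lemma same_elt_emb u v : same_elt m' u v <-> same_elt m (map f u) (map f v).
Proof.
split=> [|/same_elt_pmap_emb]; first exact: same_elt_map.
by rewrite !(map_pK fK).
Qed.

Lemma comm_equiv_emb u v : comm_equiv m' u v <-> comm_equiv m (map f u) (map f v).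
Proof.
split=> [|e]; first exact: comm_equiv_map.
rewrite -(map_pK fK u) -(map_pK fK v); apply: (comm_equiv_pmap _ e).
by move=> s t x y /g_some -> /g_some ->.
Qed.

Lemma reduced_emb w : reduced m' w <-> reduced m (map f w).
Proof.
split=> rw v e.
- have := same_elt_pmap_emb e; rewrite (map_pK fK) size_map => /rw /leq_trans; apply.
  by rewrite size_pmap count_size.
- by have := rw _ (same_elt_map f_inj m_f e); rewrite !size_map.
Qed.

Lemma all_map_emb u : all P (map f u).
Proof. by rewrite all_map; apply/allP => x _ /=; rewrite P_g fK. Qed.

Lemma FC_word_emb w : FC_word m' w <-> FC_word m (map f w).
Proof.
split=> -[rw fw]; (split; first exact/reduced_emb) => v e rv.
- have av := reduced_all cP rv (same_elt_sym e) (all_map_emb w).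
  rewrite -(map_pmap_emb av) in e rv *.
  by apply/comm_equiv_emb/fw; [apply/same_elt_emb | apply/reduced_emb].
- by apply/comm_equiv_emb/fw; [apply/same_elt_emb | apply/reduced_emb].
Qed.

Lemma FC_count_emb l : FC_count m' l = FC_count_in m P l.
Proof.
have img : [set map_tuple f w | w : l.-tuple S' in FC_tuples m' predT l] = FC_tuples m P l.
  apply/setP => w; rewrite inE; apply/imsetP/andP => [[x]|[/pboolP fw aw]].
  - rewrite inE all_predT andbT => /pboolP fx ->; split; last exact: all_map_emb.
    exact/pboolP/FC_word_emb.
  - have sz : size (pmap g w) == l by rewrite -(size_map f) map_pmap_emb ?size_tuple.
    exists (Tuple sz); last by apply: val_inj; rewrite /= map_pmap_emb.
    by rewrite inE all_predT andbT; apply/pboolP/FC_word_emb; rewrite /= map_pmap_emb.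
rewrite (@FC_count_in_all _ _ predT) // /FC_count_in -img -imset_comp.
apply: card_imset_kernel => x y _ _ /=.
apply: iff_trans (elt_class_eq _ y (size_tuple x)) _.
apply: iff_trans (same_elt_emb x y) _.
by apply: iff_sym; apply: elt_class_eq; rewrite size_map size_tuple.
Qed.

End Embedding.

Definition conv (a b : nat -> nat) l := \sum_(j < l.+1) a j * b (l - j).

Definition eventually_zero (a : nat -> nat) := exists L, forall l, L <= l -> a l = 0.

Definition ult_periodic (a : nat -> nat) :=
  exists p l0, 0 < p /\ forall l, l0 <= l -> a (l + p) = a l.

Lemma eq_ult_periodic (a b : nat -> nat) : a =1 b -> ult_periodic a -> ult_periodic b.
Proof. by move=> ab [p [l0 [p_gt0 h]]]; exists p, l0; split=> // l Ll; rewrite -!ab h. Qed.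

Lemma eventually_zero_ult_periodic (a : nat -> nat) : eventually_zero a -> ult_periodic a.
Proof. by move=> [L h]; exists 1, L; split=> // l Ll; rewrite !h // addn1 ltnW. Qed.

Lemma conv_ge_l (a b : nat -> nat) l : a l * b 0 <= conv a b l.
Proof. by rewrite /conv big_ord_recr /= subnn leq_addl. Qed.

Lemma conv_gt (a b : nat -> nat) l :
  (forall j, 0 < a j) -> (forall j, 0 < b j) -> l < conv a b l.
Proof.
move=> a_gt0 b_gt0; apply: (@leq_trans (\sum_(j < l.+1) 1)).
  by rewrite sum_nat_const card_ord muln1.
by apply: leq_sum => j _; rewrite muln_gt0 a_gt0 b_gt0.
Qed.

Lemma conv_support (a b : nat -> nat) B l : (forall t, B <= t -> b t = 0) -> B <= l.+1 ->
  conv a b l = \sum_(t < B) a (l - t) * b t.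
Proof.
move=> b0 Bl; have -> : conv a b l = \sum_(t < l.+1) a (l - t) * b t.
  by rewrite /conv (reindex_inj rev_ord_inj); apply: eq_bigr => t _; rewrite /= subKn // -ltnS.
rewrite -!(big_mkord xpredT (fun t => a (l - t) * b t)) (big_cat_nat (leq0n B) Bl) /=.
rewrite [X in _ + X]big1_seq ?addn0 // => t /andP[_].
by rewrite mem_iota => /andP[/b0 -> _]; rewrite muln0.
Qed.

Lemma eventually_zero_conv (a b : nat -> nat) :
  eventually_zero a -> eventually_zero b -> eventually_zero (conv a b).
Proof.
move=> [La a0] [Lb b0]; exists (La + Lb) => l Ll; rewrite /conv big1 // => j _.
case: (ltnP j La) => jLa; last by rewrite a0.
rewrite b0 ?muln0 // leq_subRL; last by rewrite -ltnS ltn_ord.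
by apply: leq_trans Ll; rewrite leq_add2r ltnW.
Qed.

Lemma ult_periodic_conv (a b : nat -> nat) :
  ult_periodic a -> eventually_zero b -> ult_periodic (conv a b).
Proof.
move=> [p [l0 [p_gt0 a_per]]] [B b0]; exists p, (l0 + B); split=> // l Ll.
rewrite !(conv_support _ b0); try lia.
by apply: eq_bigr => -[t /= tB] _; rewrite -addnBAC ?a_per //; lia.
Qed.

Lemma ult_periodic_mod (c : nat -> nat) p l0 : 0 < p ->
  (forall l, l0 <= l -> c (l + p) = c l) ->
  forall n, l0 <= n -> c n = c (l0 + (n - l0) %% p).
Proof.
move=> p_gt0 c_per n l0n.
have c_mulp q j : c (l0 + q + j * p) = c (l0 + q).
  elim: j => [|j IH]; first by rewrite addn0.
  by rewrite mulSn (addnC p) addnA c_per ?IH //; lia.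
have e : l0 + (n - l0) %% p + (n - l0) %/ p * p = n.
  by rewrite -addnA (addnC _ (_ * _)) -divn_eq subnKC.
by rewrite -{1}e c_mulp.
Qed.

Lemma ult_periodic_bounded (c : nat -> nat) : ult_periodic c -> exists M, forall n, c n <= M.
Proof.
move=> [p [l0 [p_gt0 c_per]]]; exists (\max_(i < l0 + p) c i) => n.
have ub i : i < l0 + p -> c i <= \max_(i < l0 + p) c i by move=> ip; apply: (leq_bigmax (Ordinal ip)).
case: (ltnP n l0) => nl0; first by apply: ub; apply: leq_trans nl0 (leq_addr _ _).
by rewrite (ult_periodic_mod p_gt0 c_per nl0); apply: ub; rewrite ltn_add2l ltn_pmod.
Qed.

(* Pigeonhole on the finitely many states [st l]: a repeated state repeats forever. *)
Lemma ult_periodic_of_state (X : finType) (st : nat -> X) (a : nat -> nat) L :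
  (forall l l', L <= l -> L <= l' -> st l = st l' -> st l.+1 = st l'.+1) ->
  (forall l l', L <= l -> L <= l' -> st l = st l' -> a l = a l') -> ult_periodic a.
Proof.
move=> st_step st_a; pose f (i : 'I_#|X|.+1) := st (L + i).
have /injectivePn[i [j ij fij]] : ~~ injectiveb f.
  by apply/injectiveP => /leq_card; rewrite card_ord ltnn.
wlog lt_ij : i j ij fij / i < j.
  move=> W; case: (ltngtP i j) => h; first exact: (W i j).
  - by apply: (W j i); rewrite // eq_sym.
  - by move: ij; rewrite (val_inj h) eqxx.
have st_shift n : st (L + i + n) = st (L + j + n).
  elim: n => [|n IH]; first by rewrite !addn0.
  by rewrite !addnS; apply: st_step; rewrite ?IH // -addnA leq_addr.
exists (j - i), (L + i); split=> [|l Ll]; first by rewrite subn_gt0.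
have -> : l + (j - i) = L + j + (l - (L + i)) by lia.
have {2}-> : l = L + i + (l - (L + i)) by lia.
by symmetry; apply: st_a (st_shift _); lia.
Qed.

Lemma conv_recurrence (a r : nat -> nat) d n : r 0 = 1 -> (forall t, d < t -> r t = 0) ->
  d <= n -> conv a r n = a n + \sum_(t < d) a (n - t.+1) * r t.+1.
Proof.
by move=> r0 r_supp dn; rewrite (@conv_support _ _ d.+1) // big_ord_recl /= subn0 r0 muln1.
Qed.

(* [a] is bounded by [conv a r] and determined, through the recurrence above, by its last
   [d + 1] values and the phase of [conv a r]: finitely many states. *)
Lemma ult_periodic_deconv (a r : nat -> nat) d : r 0 = 1 -> (forall t, d < t -> r t = 0) ->
  ult_periodic (conv a r) -> ult_periodic a.
Proof.
move=> r0 r_supp c_per; set c := conv a r.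
have [M c_le] := ult_periodic_bounded c_per.
have a_le n : a n <= M by apply: leq_trans (c_le n); have := conv_ge_l a r n; rewrite r0 muln1.
have [p [l0 [p_gt0 c_per']]] := c_per.
have a_rec n : d <= n -> a n = c n - \sum_(t < d) a (n - t.+1) * r t.+1.
  by move=> dn; rewrite /c (conv_recurrence _ r0 r_supp) // addnK.
pose st l := ([ffun t : 'I_d.+1 => (inord (a (l - t)) : 'I_M.+1)],
              Ordinal (ltn_pmod (l - l0) p_gt0)).
have st_eq l l' : st l = st l' ->
    (forall t, t <= d -> a (l - t) = a (l' - t)) /\ (l - l0) %% p = (l' - l0) %% p.
  case=> /ffunP win ph; split=> // t td; have := win (inord t); rewrite !ffunE.
  by move/(congr1 val); rewrite /= !inordK // ltnS.
have phaseS l l' : l0 <= l -> l0 <= l' -> (l - l0) %% p = (l' - l0) %% p ->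
    (l.+1 - l0) %% p = (l'.+1 - l0) %% p.
  by move=> l0l l0l' ph; rewrite !subSn // -!(addn1 (_ - l0)) -modnDml ph modnDml.
apply: (@ult_periodic_of_state _ st a (l0 + d)) => l l' Ll Ll' /st_eq[win ph]; last first.
  by have := win 0 (leq0n d); rewrite !subn0.
have aS : a l.+1 = a l'.+1.
  rewrite (a_rec l.+1) ?(a_rec l'.+1); try lia.
  rewrite /c (ult_periodic_mod p_gt0 c_per' (n := l.+1)); last lia.
  rewrite (ult_periodic_mod p_gt0 c_per' (n := l'.+1)); last lia.
  rewrite (phaseS l l') //; try lia.
  by congr (_ - _); apply: eq_bigr => t _; rewrite !subSS win // ltnW.
congr (_, _); last by apply: val_inj; rewrite /= (phaseS l l') //; lia.
apply/ffunP => -[[|t] tlt]; rewrite !ffunE /= ?subn0 ?aS // !subSS win //; lia.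
Qed.

Section ProductCount.

Variables (S : finType) (m : S -> S -> nat) (P Q : pred S).
Hypotheses (PQ_disj : forall s, P s -> ~~ Q s)
  (cP : commutes_outside m P) (cQ : commutes_outside m Q).

Let QP_disj s : Q s -> ~~ P s. Proof. by apply: contraTN => /PQ_disj. Qed.

Let all_predUC w : all (predU P Q) w -> all (predU Q P) w.
Proof. by rewrite (eq_all (a2 := predU Q P)) // => x /=; rewrite orbC. Qed.

Let size_filterQ l (x : l.-tuple S) :
  all (predU P Q) x -> size (filter Q x) = l - count P x.
Proof.
by move=> ax; have := size_split_disj PQ_disj ax; rewrite size_tuple size_filter; lia.
Qed.

Let level l a := [set x in FC_tuples m (predU P Q) l | count P x == a].

Lemma FC_tuples_level_image l a : a <= l ->
  [set (elt_class m a (filter P x), elt_class m (l - a) (filter Q x)) | x : l.-tuple S in level l a] =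
  setX [set elt_class m a w | w : a.-tuple S in FC_tuples m P a]
       [set elt_class m (l - a) w | w : (l - a).-tuple S in FC_tuples m Q (l - a)].
Proof.
move=> al; apply/setP => -[cu cv]; rewrite inE /=; apply/imsetP/andP.
- case=> x; rewrite !inE => /andP[/andP[/pboolP fx ax] /eqP xa] [-> ->].
  have sP : size (filter P x) == a by rewrite size_filter xa.
  have sQ : size (filter Q x) == l - a by rewrite size_filterQ // xa.
  split; apply/imsetP.
  + exists (Tuple sP) => //; rewrite inE filter_all andbT.
    exact/pboolP/(FC_word_filter PQ_disj cP ax).
  + exists (Tuple sQ) => //; rewrite inE filter_all andbT.
    exact/pboolP/(FC_word_filter QP_disj cQ (all_predUC ax)).
- case=> /imsetP[u]; rewrite inE => /andP[/pboolP fu au] ->.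
  case/imsetP=> v; rewrite inE => /andP[/pboolP fv av] ->.
  have fPe : filter P (u ++ v) = u.
    by rewrite filter_cat (all_filterP au) (filter_disj_nil PQ_disj av) cats0.
  have fQe : filter Q (u ++ v) = v.
    by rewrite filter_cat (all_filterP av) (filter_disj_nil QP_disj au).
  have auv : all (predU P Q) (u ++ v).
    by rewrite all_cat; apply/andP; split; [apply: sub_all au | apply: sub_all av];
      move=> z /= ->; rewrite ?orbT.
  have sz : size (u ++ v : seq S) == l by rewrite size_cat !size_tuple subnKC.
  exists (Tuple sz); last by rewrite /= fPe fQe.
  rewrite !inE /= auv andbT -size_filter fPe size_tuple eqxx andbT.
  by apply/pboolP/(FC_word_of_filters PQ_disj cP cQ auv); rewrite ?fPe ?fQe.
Qed.

Lemma FC_count_in_level l a : a <= l ->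
  #|[set elt_class m l x | x : l.-tuple S in level l a]| = FC_count_in m P a * FC_count_in m Q (l - a).
Proof.
move=> al; rewrite /FC_count_in -cardsX -FC_tuples_level_image //.
apply: card_imset_kernel => x y; rewrite !inE.
move=> /andP[/andP[_ ax] /eqP xa] /andP[/andP[_ ay] /eqP ya].
have sPx : size (filter P x) = a by rewrite size_filter.
have sQx : size (filter Q x) = l - a by rewrite size_filterQ ?xa.
apply: iff_trans (elt_class_eq _ _ (size_tuple x)) _.
apply: iff_trans (same_elt_filters PQ_disj cP cQ ax ay) _.
split=> [[eP eQ]|[]]; first by congr pair; apply/elt_class_eq.
by move=> /(elt_class_eq _ _ sPx) eP /(elt_class_eq _ _ sQx) eQ.
Qed.

Lemma FC_count_inU l :
  FC_count_in m (predU P Q) l = conv (FC_count_in m P) (FC_count_in m Q) l.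
Proof.
rewrite /FC_count_in (card_imset_sum_level (k := fun x : l.-tuple S => count P x) (n := l.+1)).
- apply: eq_bigr => -[a /=]; rewrite ltnS => al _; exact: FC_count_in_level.
- move=> x y; rewrite !inE => /andP[/pboolP[rx _] ax] /andP[/pboolP[ry _] ay].
  move=> /(elt_class_eq _ _ (size_tuple x)) /(same_elt_filter cP) e.
  rewrite -!size_filter; apply: reduced_same_elt_size e.
  + exact: reduced_catl (reduced_split_disj PQ_disj cP ax rx).
  + exact: reduced_catl (reduced_split_disj PQ_disj cP ay ry).
- by move=> x _; rewrite ltnS -{2}(size_tuple x) count_size.
Qed.

End ProductCount.

Lemma rem_cat (T : eqType) (x : T) s1 s2 :
  rem x (s1 ++ s2) = if x \in s1 then rem x s1 ++ s2 else s1 ++ rem x s2.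
Proof.
elim: s1 => [//|y s1 IH] /=; rewrite in_cons eq_sym.
by case: (eqVneq x y) => //= _; rewrite IH; case: (x \in s1).
Qed.

Section FCFinite.

Variables (S : finType) (m : S -> S -> nat).

Lemma comm_equiv_rem s u v : comm_equiv m u v -> comm_equiv m (rem s u) (rem s v).
Proof.
apply: clos_rst_map => _ _ [a b x y mxy]; rewrite !(rem_cat s a).
case: (s \in a); first exact/rst_step/cm_swap.
rewrite /=; case: (eqVneq x s) => [xs|xs]; case: (eqVneq y s) => [ys|ys];
  try exact: rst_refl.
- by rewrite xs ys; apply: rst_refl.
- exact/rst_step/cm_swap.
Qed.

Lemma comm_equiv_rev u v : comm_equiv m u v -> comm_equiv m (rev u) (rev v).
Proof.
apply: clos_rst_map => _ _ [a b x y mxy]; apply/rst_sym/rst_step.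
by rewrite !rev_cat -!catA; apply: cm_swap.
Qed.

Lemma comm_equiv_rcons_inj u v s :
  comm_equiv m (rcons u s) (rcons v s) -> comm_equiv m u v.
Proof.
move/comm_equiv_rev/(comm_equiv_rem s); rewrite !rev_rcons /= eqxx.
by move/comm_equiv_rev; rewrite !revK.
Qed.

Lemma FC_word_rcons u s : FC_word m (rcons u s) -> FC_word m u.
Proof.
have ext v : same_elt m v u -> same_elt m (rcons v s) (rcons u s).
  by move=> e; rewrite -!cats1; apply: same_elt_cat e (same_elt_refl _ _).
move=> [rus fus]; have ru : reduced m u by rewrite -cats1 in rus; apply: reduced_catl rus.
split=> // v e rv; have e' := ext _ (same_elt_sym e).
apply: comm_equiv_rcons_inj (fus _ (same_elt_sym e') _).
apply: (reduced_same_elt rus (same_elt_sym e')).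
by rewrite !size_rcons (reduced_same_elt_size ru rv e).
Qed.

Lemma FC_word_catl u v : FC_word m (u ++ v) -> FC_word m u.
Proof.
elim/last_ind: v => [|v x IH]; first by rewrite cats0.
by rewrite -rcons_cat => /FC_word_rcons.
Qed.

Lemma FC_finite_eventually_zero : FC_finite m -> eventually_zero (FC_count m).
Proof.
case=> ws ws_FC; exists (\max_(v <- ws) size v).+1 => l Ll.
rewrite (@FC_count_in_all _ _ predT) //; apply: FC_count_in_eq0 => w fw _.
case: (ws_FC _ fw) => v vws /(proj1 fw) wv; rewrite neq_ltn; apply/orP; left.
by apply: leq_ltn_trans Ll; apply: leq_trans wv (leq_bigmax_seq _ _ _).
Qed.

Fixpoint words_upto (n : nat) : seq (seq S) :=
  if n is n'.+1 then [::] :: [seq x :: w | x <- enum S, w <- words_upto n'] else [:: [::]].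

Lemma mem_words_upto n (w : seq S) : size w <= n -> w \in words_upto n.
Proof.
elim: n w => [|n IH] [|x w] //=; rewrite ?inE ?eqxx // ltnS => sw.
by apply: (allpairs_f (fun x w => x :: w)); [rewrite mem_enum | apply: IH].
Qed.

(* Prefixes of FC words are FC, so if no FC element has length [l], none is longer. *)
Lemma FC_count_gt0 : ~ FC_finite m -> forall l, 0 < FC_count m l.
Proof.
move=> infinite l; rewrite lt0n; apply/negP => /eqP count0; apply: infinite.
exists (words_upto l) => w fw; exists w; last exact: same_elt_refl.
apply: mem_words_upto; rewrite leqNgt; apply/negP => lw.
have := @FC_word_catl (take l w) (drop l w); rewrite cat_take_drop => /(_ fw) ft.
have := @FC_count_in_gt0 _ m predT _ ft (all_predT _).
by rewrite -FC_count_in_all // size_take lw count0.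
Qed.

End FCFinite.

Section CoxeterProduct.

Variables (k : nat) (T : 'I_k -> finType) (mi : forall i, T i -> T i -> nat).

Definition in_factors (J : {set 'I_k}) : pred {i : 'I_k & T i} := fun x => tag x \in J.

Definition FC_count_factors (J : {set 'I_k}) := FC_count_in (prod_mx mi) (in_factors J).

Lemma commutes_outside_factors J : commutes_outside (prod_mx mi) (in_factors J).
Proof.
rewrite /in_factors => x y xJ yJ; have neq_xy : tag x != tag y by apply: contraNneq yJ => <-.
by rewrite /prod_mx (negbTE neq_xy) eq_sym (negbTE neq_xy).
Qed.

Lemma FC_count_prod l : FC_count (prod_mx mi) l = FC_count_factors setT l.
Proof. by apply: FC_count_in_all => x; rewrite /in_factors inE. Qed.

Lemma FC_count_factor1 (i : 'I_k) l : FC_count (@mi i) l = FC_count_factors [set i] l.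
Proof.
have inj_i : injective (Tagged T : T i -> _).
  by move=> x y exy; rewrite -(tagged_asE (u := Tagged T x) y) -exy tagged_asE.
pose g y := [pick x : T i | Tagged T x == y].
rewrite /FC_count_factors; apply: (FC_count_emb (f := Tagged T) (g := g)).
- by move=> x; rewrite /g; case: pickP => [x' /eqP /inj_i -> //|/(_ x)]; rewrite eqxx.
- by move=> y; rewrite /g; case: pickP => [x /eqP|].
- case=> j y; rewrite /in_factors inE /g /=; case: pickP => [x /eqP /(congr1 tag) /= <-|none].
    by rewrite eqxx.
  by apply/negbTE/eqP => ji; subst j; have := none y; rewrite eqxx.
- exact: commutes_outside_factors.
- by move=> x y; rewrite /prod_mx /= eqxx tagged_asE.
Qed.

Lemma FC_count_factors0 (J : {set 'I_k}) : FC_count_factors J 0 = 1.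
Proof. exact: FC_count_in0. Qed.

Lemma FC_count_factorsU1 (j : 'I_k) (J : {set 'I_k}) l : j \notin J ->
  FC_count_factors (j |: J) l = conv (FC_count (@mi j)) (FC_count_factors J) l.
Proof.
move=> jJ; rewrite /FC_count_factors.
rewrite (@eq_FC_count_in _ _ _ (predU (in_factors [set j]) (in_factors J))); last first.
  by move=> x; rewrite /in_factors /= !inE.
rewrite FC_count_inU; try exact: commutes_outside_factors.
- by apply: eq_bigr => a _; rewrite FC_count_factor1.
- by move=> x; rewrite /in_factors inE => /eqP ->.
Qed.

Lemma FC_count_prod_split (i : 'I_k) l :
  FC_count (prod_mx mi) l = conv (FC_count (@mi i)) (FC_count_factors [set~ i]) l.
Proof. by rewrite FC_count_prod -FC_count_factorsU1 ?setC11 // setUCr. Qed.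

Lemma eventually_zero_factors (J : {set 'I_k}) :
  (forall j, j \in J -> FC_finite (@mi j)) -> eventually_zero (FC_count_factors J).
Proof.
move Jn : #|J| => n; elim: n J Jn => [|n IH] J Jn J_fin.
  exists 1; rewrite (cards0_eq Jn) => l l_gt0; apply: FC_count_in_eq0 => -[|x w] _ /=.
    by rewrite eq_sym -lt0n.
  by rewrite /in_factors in_set0.
have /set0Pn[j jJ] : J != set0 by rewrite -card_gt0 Jn.
have [L zero_j] := FC_finite_eventually_zero (J_fin _ jJ).
have [L' zero_J] : eventually_zero (FC_count_factors (J :\ j)).
  apply: IH; first by move: Jn; rewrite (cardsD1 j J) jJ => -[].
  by move=> x; rewrite inE => /andP[_ /J_fin].
have [L'' zero_conv] := eventually_zero_conv (ex_intro _ L zero_j) (ex_intro _ L' zero_J).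
by exists L'' => l Ll; rewrite -(setD1K jJ) FC_count_factorsU1 ?setD11 // zero_conv.
Qed.

Lemma FC_finite_other_factors (i j : 'I_k) :
  ult_periodic (FC_count (prod_mx mi)) -> ~ FC_finite (@mi i) -> j != i -> FC_finite (@mi j).
Proof.
move=> per inf_i ji; apply: NNPP => inf_j; have [M bound] := ult_periodic_bounded per.
have rest_gt0 l : 0 < FC_count_factors [set~ i] l.
  have jJ : j \in [set~ i] by rewrite in_setC1.
  rewrite -(setD1K jJ) FC_count_factorsU1 ?setD11 //.
  by apply: leq_trans (conv_ge_l _ _ l); rewrite FC_count_factors0 muln1 FC_count_gt0.
have := conv_gt M (FC_count_gt0 inf_i) rest_gt0.
by rewrite -FC_count_prod_split ltnNge bound.
Qed.

End CoxeterProduct.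

Unset Implicit Arguments.

Theorem lemma4p1 (k : nat) (T : 'I_k -> finType)
    (mi : forall i, T i -> T i -> nat)
    (hcox : forall i, coxeter_matrix (mi i))
    (hirr : forall i, irreducible (mi i)) :
  FC_periodic (prod_mx mi) <->
  ((forall i, FC_finite (mi i)) \/
   exists i, FC_periodic (mi i) /\ forall j, j != i -> FC_finite (mi j)).
Proof.
have finite_rest i : (forall j, j != i -> FC_finite (mi j)) ->
    eventually_zero (FC_count_factors mi [set~ i]).
  by move=> fin; apply: eventually_zero_factors => j; rewrite in_setC1; apply: fin.
split=> [per|[fin|[i [per_i fin]]]].
- have [|/not_all_ex_not[i inf_i]] := classic (forall i, FC_finite (mi i)); first by left.
  have fin j : j != i -> FC_finite (mi j) by apply: FC_finite_other_factors per inf_i.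
  right; exists i; split=> //; have [L rest0] := finite_rest i fin.
  apply: (ult_periodic_deconv (FC_count_factors0 _ _) (fun t Lt => rest0 t (ltnW Lt))).
  exact: eq_ult_periodic (FC_count_prod_split mi i) per.
- apply: eq_ult_periodic (fun l => esym (FC_count_prod mi l)) _.
  by apply/eventually_zero_ult_periodic/eventually_zero_factors => j _; apply: fin.
- apply: eq_ult_periodic (fun l => esym (FC_count_prod_split mi i l)) _.
  exact: ult_periodic_conv per_i (finite_rest i fin).
Qed.
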